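(* Let $a,b\in\mathbb F_{q^2}^*$, integers $0<i_1<i_2<(q+1)/d$ and $0\le j_1,j_2<d$, and for $0\le k<d$ put $L_k(X)=1+a\epsilon^{j_1k}X^{i_1}+b\epsilon^{j_2k}X^{i_2}$. If for some $0\le k<d$ there exists $\lambda_k\in\mu_{q+1}$ with $L_k\in\mathcal L_k(i_2,0;\lambda_k)$, then $i_1=i_2/2$, $b=a^{1-q}\epsilon^{(2j_1-j_2)k}$, $\lambda_k=b^q\epsilon^{-j_2k}$, and $\lambda_k^{(q+1)/d}=\epsilon^{-2j_1k(q+1)/d+\alpha}$, where $\alpha\in\mathbb Z/d\mathbb Z$ is defined by $a^{(q^2-1)/d}=\epsilon^\alpha$.
   Context: $q$ is a prime power, $d$ is a positive divisor of $q+1$, and $\epsilon\in\mathbb F_{q^2}^*$ has multiplicative order $d$. $\mu_{q+1}$ is the subgroup of order $q+1$ of $\mathbb F_{q^2}^*$. For $a\in\mathbb F_{q^2}$, $\bar a=a^q$; for $f(X)=\sum_{i=0}^n a_iX^i\in\mathbb F_{q^2}[X]$ with $a_n\neq0$, $\tilde f(X)=\sum_{i=0}^n\bar a_iX^{n-i}$. For $0\le k<d$, $0\le t<(q+1)/d$ and $\lambda\in\mu_{q+1}$, $\mathcal L_k(t,0;\lambda)$ is the set of $L\in\mathbb F_{q^2}[X]$ with $\deg L=t$, $\tilde L=\lambda L$ and $\gcd(L,X^{(q+1)/d}-\epsilon^k)=1$. *)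

From mathcomp Require Import all_boot all_order all_algebra all_field.
Set Implicit Arguments. Unset Strict Implicit. Unset Printing Implicit Defensive.
Import GRing.Theory.
Local Open Scope ring_scope.

Definition fconj (F : ringType) (q : nat) (a : F) : F := a ^+ q.

Definition ptilde (F : ringType) (q : nat) (f : {poly F}) : {poly F} :=
  \poly_(i < size f) fconj q (f`_((size f).-1 - i)).

Definition in_mu (F : ringType) (q : nat) (x : F) : Prop := x ^+ q.+1 = 1.

Definition Lset (F : fieldType) (q d : nat) (eps : F) (k t : nat) (lam : F)
    (L : {poly F}) : Prop :=
  [/\ size L = t.+1,
      ptilde q L = lam *: L
    & coprimep L ('X^(q.+1 %/ d) - (eps ^+ k)%:P)].

From mathcomp Require Import all_boot all_order all_algebra all_field.
From mathcomp Require Import zify.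
Set Implicit Arguments. Unset Strict Implicit. Unset Printing Implicit Defensive.
Import GRing.Theory.
Local Open Scope ring_scope.

(* Comparing the coefficients of X^j and X^(i2 - j) in the identity ~L = lam L
   shows that the support {0, i1, i2} of the trinomial L is symmetric, so
   i2 = 2 i1, and yields B^q = lam, lam B = 1 and A^q = lam A for the two
   nonconstant coefficients A and B.  Since eps and lam lie in mu_(q+1), on
   which x |-> x^q is inversion, these relations can be solved for b and lam. *)

Section SelfReciprocal.
Variables (F : idomainType) (q : nat).

Lemma coef_ptilde (f : {poly F}) j :
  (ptilde q f)`_j = if (j < size f)%N then f`_((size f).-1 - j) ^+ q else 0.
Proof. by rewrite /ptilde coef_poly. Qed.

Lemma self_reciprocal_coef (f : {poly F}) lam j :
  ptilde q f = lam *: f -> (j < size f)%N ->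
  f`_((size f).-1 - j) ^+ q = lam * f`_j.
Proof. by move=> hf hj; rewrite -coefZ -hf coef_ptilde hj. Qed.

Lemma self_reciprocal_coef_neq0 (f : {poly F}) lam j :
  ptilde q f = lam *: f -> (j < size f)%N ->
  f`_((size f).-1 - j) != 0 -> f`_j != 0.
Proof.
move=> hf hj; apply: contra => /eqP fj0.
have := self_reciprocal_coef hf hj; rewrite fj0 mulr0 => /eqP.
by rewrite expf_eq0 => /andP[].
Qed.

End SelfReciprocal.

Section Trinomial.
Variables (F : fieldType) (q : nat) (A B : F) (i1 i2 : nat).
Hypotheses (A0 : A != 0) (B0 : B != 0) (i1_gt0 : (0 < i1)%N) (i1_lt_i2 : (i1 < i2)%N).

Let P : {poly F} := 1 + A%:P * 'X^i1 + B%:P * 'X^i2.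

Lemma coef_trinomial j :
  P`_j = (j == 0)%:R + A * (j == i1)%:R + B * (j == i2)%:R.
Proof. by rewrite !coefD coef1 !coefCM !coefXn. Qed.

Lemma size_trinomial : size P = i2.+1.
Proof.
have sizeB : size (B%:P * 'X^i2) = i2.+1 by rewrite mul_polyC size_scale ?size_polyXn.
rewrite /P addrC size_polyDl sizeB // ltnS (leq_trans (size_polyD _ _)) //.
by rewrite size_poly1 mul_polyC geq_max size_scale ?size_polyXn //; lia.
Qed.

Lemma trinomial_self_reciprocal lam : ptilde q P = lam *: P ->
  [/\ i2 = (2 * i1)%N, B ^+ q = lam, lam * B = 1 & A ^+ q = lam * A].
Proof.
move=> hP.
have mirror j : (j <= i2)%N -> P`_(i2 - j) ^+ q = lam * P`_j.
  by move=> hj; have := self_reciprocal_coef hP; rewrite size_trinomial; apply.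
have [e10 e20 e12] : [/\ (i1 == 0) = false, (i2 == 0) = false & (i1 == i2) = false]%N.
  by split; apply/negbTE; lia.
have coef0 : P`_0 = 1.
  rewrite coef_trinomial eqxx [(0 == i1)%N]eq_sym [(0 == i2)%N]eq_sym e10 e20.
  by rewrite !mulr0 !addr0.
have coef1 : P`_i1 = A by rewrite coef_trinomial eqxx e10 e12 mulr0 mulr1 add0r addr0.
have coef2 : P`_i2 = B.
  by rewrite coef_trinomial eqxx e20 [(i2 == i1)%N]eq_sym e12 mulr0 mulr1 !add0r.
have mid : (i2 - i1)%N = i1.
  have := self_reciprocal_coef_neq0 hP (j := (i2 - i1)%N).
  rewrite size_trinomial subKn ?(ltnW i1_lt_i2) // coef1 coef_trinomial ltnS leq_subr.
  move=> /(_ isT A0).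
  have [/negbTE -> /negbTE ->] : (i2 - i1 != 0)%N /\ (i2 - i1 != i2)%N by split; lia.
  by rewrite mulr0 add0r addr0; apply: contraTeq => /negbTE ->; rewrite mulr0 eqxx.
have := mirror i1 (ltnW i1_lt_i2); have := mirror i2 (leqnn _).
have := mirror 0%N (leq0n _).
rewrite mid subnn subn0 coef0 coef1 coef2 expr1n mulr1 => -> <- ->.
by split=> //; lia.
Qed.

End Trinomial.

Section UnitCircle.
Variables (F : fieldType) (q : nat).

Lemma in_mu_neq0 (u : F) : in_mu q u -> u != 0.
Proof. by apply: contra_eqN => /eqP ->; rewrite expr0n eq_sym oner_eq0. Qed.

Lemma in_mu_expr (u : F) n : in_mu q u -> in_mu q (u ^+ n).
Proof. by rewrite /in_mu exprAC => ->; rewrite expr1n. Qed.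

Lemma in_mu_exprq (u : F) : in_mu q u -> u ^+ q = u^-1.
Proof.
move=> hu; have u0 := in_mu_neq0 hu.
by apply: (mulIf u0); rewrite -exprSr hu mulVf.
Qed.

Lemma in_mu_expr_predq (u : F) : (0 < q)%N -> in_mu q u -> u ^+ q.-1 = u ^- 2.
Proof.
move=> q_gt0 hu; have u2_0 := expf_neq0 2 (in_mu_neq0 hu).
by apply: (mulIf u2_0); rewrite -exprD addn2 prednK // hu mulVf.
Qed.

Lemma in_mu_exprz_subq (u : F) : in_mu q u -> u ^ (1 - (q : int)) = u ^+ 2.
Proof.
move=> hu; rewrite expfzDr ?in_mu_neq0 // expr1z -exprnN.
by rewrite in_mu_exprq // invrK expr2.
Qed.

End UnitCircle.

Lemma predn_sqr_divn d q : (d %| q.+1)%N -> ((q ^ 2).-1 %/ d = q.-1 * (q.+1 %/ d))%N.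
Proof. by move=> dvd_dq; rewrite muln_divA //; congr (_ %/ d)%N; case: q {dvd_dq}; nia. Qed.

Theorem lemma4p4 (F : finFieldType) (q d : nat) (eps : F)
  (hq : exists p e : nat, [/\ prime p, (0 < e)%N & q = (p ^ e)%N])
  (hF : #|F| = (q ^ 2)%N)
  (hd : (0 < d)%N) (hdq : (d %| q.+1)%N)
  (heps : d.-primitive_root eps)
  (a b : F) (ha : a != 0) (hb : b != 0)
  (i1 i2 j1 j2 : nat)
  (hi1 : (0 < i1)%N) (hi12 : (i1 < i2)%N) (hi2 : (i2 < q.+1 %/ d)%N)
  (hj1 : (j1 < d)%N) (hj2 : (j2 < d)%N)
  (k : nat) (hk : (k < d)%N) (lam : F) (hlam : in_mu q lam)
  (hL : Lset q d eps k i2 lam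
          (1 + (a * eps ^+ (j1 * k))%:P * 'X^i1 + (b * eps ^+ (j2 * k))%:P * 'X^i2)) :
  [/\ i2 = (2 * i1)%N,
      b = a ^ (1 - (q : int)) * eps ^ ((2 * (j1 : int) - (j2 : int)) * (k : int)),
      lam = b ^+ q * eps ^ (- ((j2 * k)%N : int))
    & forall alpha : int, a ^+ ((q ^ 2).-1 %/ d) = eps ^ alpha ->
        lam ^+ (q.+1 %/ d) = eps ^ (- ((2 * j1 * k * (q.+1 %/ d))%N : int) + alpha)].
Proof.
have q_gt0 : (0 < q)%N by case: hq => p [e [/prime_gt0 p_gt0 _ ->]]; rewrite expn_gt0 p_gt0.
have eps_mu : in_mu q eps by apply/eqP; rewrite -(prim_order_dvd heps).
have eps0 := in_mu_neq0 eps_mu.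
set x := eps ^+ (j1 * k); set y := eps ^+ (j2 * k).
have [x_mu y_mu] : in_mu q x /\ in_mu q y by split; apply: in_mu_expr.
have [x0 y0] := (in_mu_neq0 x_mu, in_mu_neq0 y_mu).
have [A0 B0] : a * x != 0 /\ b * y != 0 by rewrite !mulf_neq0.
case: hL => _ /(trinomial_self_reciprocal A0 B0 hi1 hi12) [i2E Bq lamB Aq] _.
have B_inv : b * y = lam^-1 by rewrite -[RHS]mulr1 -lamB mulKf ?(in_mu_neq0 hlam).
have B_eq : b * y = (a * x) ^ (1 - (q : int)).
  by rewrite B_inv expfzDr // expr1z -exprnN Aq invfM mulrCA divff ?mulr1.
have lam_eq : lam = a ^+ q.-1 * x ^- 2.
  rewrite -(in_mu_expr_predq q_gt0 x_mu) -exprMn.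
  by apply: (mulIf A0); rewrite -Aq -exprSr prednK.
split=> [//||| alpha a_alpha].
- have -> : (2 * (j1 : int) - (j2 : int)) * (k : int)
            = ((j1 * k * 2)%N : int) - ((j2 * k)%N : int) by lia.
  rewrite (expfzDr _ _ eps0) -exprnN -exprnP exprM -/x -/y mulrA.
  by rewrite -(in_mu_exprz_subq x_mu) -expfzMl -B_eq mulfK.
- by rewrite -exprnN -/y -Bq exprMn (in_mu_exprq y_mu).
- rewrite expfzDr // -a_alpha -exprnN lam_eq exprMn -exprM -predn_sqr_divn // mulrC.
  by rewrite exprVn /x -!exprM [(j1 * k * 2)%N]mulnC !mulnA.
Qed.
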